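(* Let $(X,\|\cdot\|)$ be a Banach space, $K\subset X$ a cone, $U$ a relatively open subset of $K$, and $T:\overline{U}\to K$ an operator (not necessarily continuous). Let $\mathbb{T}:\overline{U}\to 2^K$ be the closed--convex envelope of $T$. Then: 1. If $T$ maps bounded sets into relatively compact sets, then $\mathbb{T}$ has compact values and is upper semicontinuous. 2. If $T(\overline{U})$ is relatively compact, then $\mathbb{T}(\overline{U})=\bigcup_{x\in\overline U}\mathbb T x$ is relatively compact.
   Context: A cone in a Banach space $X$ is a closed convex set $K$ such that $\lambda x\in K$ for all $x\in K$, $\lambda\ge 0$, and such that $x\in K$, $-x\in K$ imply $x=0$. The closed--convex envelope of $T:\overline{U}\to K$ is the multivalued map $\mathbb{T}:\overline U\to 2^K$ given by $\mathbb{T}x=\bigcap_{\varepsilon>0}\overline{\mathrm{co}}\,T\big(\overline{B}_\varepsilon(x)\cap\overline{U}\big)$, where $\overline B_\varepsilon(x)$ is the closed ball of center $x$ and radius $\varepsilon$ and $\overline{\mathrm{co}}$ denotes the closed convex hull. *)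

From HB Require Import structures.
From mathcomp Require Import all_boot all_order all_algebra.
From mathcomp Require Import all_classical all_reals all_analysis.
Set Implicit Arguments. Unset Strict Implicit. Unset Printing Implicit Defensive.
Import Order.TTheory GRing.Theory Num.Theory.
Import numFieldNormedType.Exports.
Local Open Scope classical_set_scope.
Local Open Scope ring_scope.

Section Defs.
Context {R : realType} {X : normedModType R}.

Definition convex_subset (A : set X) : Prop :=
  forall x y (t : R), A x -> A y -> 0 <= t -> t <= 1 -> A (t *: x + (1 - t) *: y).

Definition is_cone (K : set X) : Prop :=
  [/\ closed K, convex_subset K,
      (forall x (l : R), K x -> 0 <= l -> K (l *: x))
    & (forall x, K x -> K (- x) -> x = 0)].

Definition rel_open_in (K U : set X) : Prop :=
  exists O : set X, open O /\ U = O `&` K.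

Definition cball (x : X) (e : R) : set X := [set y | `|y - x| <= e].

Definition clconv (A : set X) : set X :=
  [set z | forall C : set X, closed C -> convex_subset C -> A `<=` C -> C z].

Definition envelope (U : set X) (T : X -> X) (x : X) : set X :=
  [set z | forall e : R, 0 < e -> clconv (T @` (cball x e `&` closure U)) z].

Definition bounded_subset (A : set X) : Prop :=
  exists M : R, forall x, A x -> `|x| <= M.

Definition rel_compact (A : set X) : Prop := compact (closure A).

Definition usc_on (D : set X) (F : X -> set X) : Prop :=
  forall x, D x -> forall V : set X, open V -> F x `<=` V ->
    exists2 d : R, 0 < d & forall y, D y -> `|y - x| < d -> F y `<=` V.

End Defs.

From HB Require Import structures.
From mathcomp Require Import all_boot all_order all_algebra.
From mathcomp Require Import all_classical all_reals all_analysis.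
From mathcomp Require Import ring lra.
Import Order.TTheory GRing.Theory Num.Theory.
Import numFieldNormedType.Exports.
Local Open Scope classical_set_scope.
Local Open Scope ring_scope.

(* When T maps bounded sets to relatively compact ones, the sets
   C(x, e) = clconv T(B(x, e) `&` cl U) are compact by Mazur's theorem: if
   s_e is a finite e-net of A for each e > 0, the points lying within e of
   the zonotope spanned by s_e, for every e, form a closed convex totally
   bounded set containing A, hence a compact one containing clconv A.
   The envelope at x is the decreasing intersection of the C(x, e), hence
   compact; if it lies in an open V then by compactness so does some C(x, e),
   and C(x, e) contains C(y, e/2) for y near x.  For the second claim, every
   envelope lies in the compact set clconv T(cl U). *)

Lemma ultra_bigcup_seq {I : choiceType} {T : Type} {F : set_system T}
    (s : seq I) (P : I -> set T) :
  UltraFilter F -> F (\bigcup_(i in [set` s]) P i) ->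
  exists2 i, i \in s & F (P i).
Proof.
move=> FU; elim: s => [|a s IHs] Fs.
  by have /filter_ex [z [i]] := Fs.
have [FPa|FnPa] := in_ultra_setVsetC (P a) FU.
  by exists a => //; rewrite mem_head.
have [|i si FPi] := IHs; last by exists i => //; rewrite in_cons si orbT.
apply: filterS (filterI Fs FnPa) => z [[i /=]].
by rewrite in_cons => /orP[/eqP-> //|si Piz _]; exists i.
Qed.

Definition totally_bounded {R : numDomainType} {X : pseudoMetricType R}
    (A : set X) :=
  forall e : R, 0 < e ->
    exists s : seq X, A `<=` \bigcup_(c in [set` s]) ball c e.

Lemma precompact_totally_bounded {R : numDomainType}
    {X : pseudoMetricNormedZmodType R} (A : set X) :
  compact (closure A) -> totally_bounded A.
Proof.
rewrite compact_cover => cA e e0.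
have [|z _|D _ AD] := cA X setT (ball ^~ e).
- by move=> c _; exact: ball_open.
- by exists z => //; exact: ballxx.
exists (finmap.enum_fset D) => z /subset_closure/AD[c Dc zc].
by exists c.
Qed.

Lemma totally_bounded_compact {R : numFieldType}
    {X : completePseudoMetricType R} (W : set X) :
  closed W -> totally_bounded W -> compact W.
Proof.
move=> cW tbW; rewrite compact_ultra => F FU FW.
have /cauchy_cvgP/cvg_ex[l Fl] : cauchy F.
  apply: cauchy_exP => e /tbW[s Ws].
  have [c _ Fc] := ultra_bigcup_seq _ _ FU (filterS Ws FW).
  by exists c.
by exists l; split => //; exact: (closed_cvg W cW FW l Fl).
Qed.

Section ClosedConvexHull.
Context {R : realType} {X : normedModType R}.
Implicit Types A B C : set X.

Lemma clconv_sub {A C} : closed C -> convex_subset C -> A `<=` C ->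
  clconv A `<=` C.
Proof. by move=> cC vC AC z /(_ C cC vC AC). Qed.

Lemma clconvS A B : A `<=` B -> clconv A `<=` clconv B.
Proof. by move=> AB z Az C cC vC BC; apply: Az => // w /AB/BC. Qed.

Lemma closed_clconv A : closed (clconv A).
Proof.
move=> z Az C cC vC AC; apply: (cC).
by apply: (closureS _ Az); exact: clconv_sub.
Qed.

End ClosedConvexHull.

Section Rounding.
Context {R : archiRealFieldType}.

Lemma truncn_mul_le (t : R) (N : nat) :
  0 <= t <= 1 -> (Num.truncn (t * N%:R) <= N)%N.
Proof.
case/andP=> _ t1; rewrite truncn_le_nat.
by apply: (@le_lt_trans _ _ N%:R); rewrite ?ltr_nat // -[leRHS]mul1r ler_wpM2r.
Qed.

Lemma dist_truncn_div (t : R) (N : nat) : (0 < N)%N -> 0 <= t ->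
  `|t - (Num.truncn (t * N%:R))%:R / N%:R| <= N%:R^-1.
Proof.
move=> N0 t0; have N0' : 0 < N%:R :> R by rewrite ltr0n.
have /andP[kl ku] := truncn_itv (mulr_ge0 t0 (ler0n _ N)).
have -> : t - (Num.truncn (t * N%:R))%:R / N%:R =
          (t * N%:R - (Num.truncn (t * N%:R))%:R) / N%:R.
  by field; rewrite gt_eqF.
rewrite normrM normfV (gtr0_norm N0') -[leRHS]mul1r ler_wpM2r ?invr_ge0 //.
by rewrite ger0_norm ?subr_ge0 //; move: ku; rewrite -natr1; lra.
Qed.

End Rounding.

Section Zonotope.
Context {R : realType} {X : normedModType R}.

Definition zonotope (s : seq X) : set X :=
  [set \sum_(i < size s) t i *: s`_i
    | t in [set t : nat -> R | forall i, 0 <= t i <= 1]].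

Lemma convex_zonotope s : convex_subset (zonotope s).
Proof.
move=> _ _ a [t1 t1P <-] [t2 t2P <-] a0 a1.
exists (fun i => a * t1 i + (1 - a) * t2 i).
  move=> i; have /andP[? ?] := t1P i; have /andP[? ?] := t2P i.
  by apply/andP; split; nra.
rewrite !scaler_sumr -big_split; apply: eq_bigr => i _.
by rewrite scalerDl !scalerA.
Qed.

Lemma mem_zonotope s c : c \in s -> zonotope s c.
Proof.
move=> cs; have js : (index c s < size s)%N by rewrite index_mem.
exists (fun i => (i == index c s)%:R).
  by move=> i; case: (_ == _); rewrite /= ?lexx ?ler01.
rewrite (bigD1 (Ordinal js)) //= eqxx scale1r nth_index // big1 ?addr0 //.
by move=> i /negbTE; rewrite -val_eqE /= => ->; rewrite scale0r.
Qed.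

Lemma totally_bounded_zonotope s : totally_bounded (zonotope s).
Proof.
move=> e e0; set n := size s; set M := \sum_(i < n) `|s`_i|.
set N := (Num.truncn (M / e)).+1.
have N0 : 0 < N%:R :> R by rewrite ltr0n.
have MNe : M / N%:R < e.
  by rewrite ltr_pdivrMr // mulrC -ltr_pdivrMr // truncnS_gt.
pose G (k : {ffun 'I_n -> 'I_N.+1}) := \sum_(i < n) ((k i)%:R / N%:R) *: s`_i.
exists (map G (enum {ffun 'I_n -> 'I_N.+1})) => _ [t t01 <-].
pose k : {ffun 'I_n -> 'I_N.+1} :=
  [ffun i : 'I_n => inord (Num.truncn (t i * N%:R))].
exists (G k) => /=; first by apply: map_f; rewrite mem_enum.
rewrite -ball_normE /= /G -sumrB; apply: le_lt_trans (ler_norm_sum _ _ _) _.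
apply: le_lt_trans MNe; rewrite /M mulr_suml; apply: ler_sum => i _.
rewrite -scalerBl normrZ mulrC ler_wpM2l // distrC ffunE inordK.
  by apply: dist_truncn_div; case/andP: (t01 i).
by rewrite ltnS truncn_mul_le.
Qed.

End Zonotope.

Section Approximable.
Context {R : realType} {X : normedModType R}.
Variable B : R -> set X.

(* The slack [d] is what makes this set closed. *)
Definition approximable : set X := [set z | forall e d : R, 0 < e -> 0 < d ->
  exists2 p, B e p & `|z - p| <= e + d].

Lemma closed_approximable : closed approximable.
Proof.
move=> z zW e d e0 d0.
have [w [Ww]] := zW _ (nbhsx_ballx z (d / 2) ltac:(lra)).
rewrite -ball_normE /= => zw.
have [p Bp wp] := Ww e (d / 2) e0 ltac:(lra).
exists p => //; have := ler_normD (z - w) (w - p); rewrite addrA subrK; lra.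
Qed.

Lemma convex_approximable :
  (forall e, 0 < e -> convex_subset (B e)) -> convex_subset approximable.
Proof.
move=> vB x y t Wx Wy t0 t1 e d e0 d0.
have [p Bp xp] := Wx e d e0 d0; have [q Bq yq] := Wy e d e0 d0.
exists (t *: p + (1 - t) *: q); first exact: vB.
have -> : t *: x + (1 - t) *: y - (t *: p + (1 - t) *: q) =
          t *: (x - p) + (1 - t) *: (y - q).
  by rewrite !scalerBr addrACA opprD.
apply: le_trans (ler_normD _ _) _; rewrite !normrZ !ger0_norm ?subr_ge0 //.
nra.
Qed.

Lemma totally_bounded_approximable :
  (forall e, 0 < e -> totally_bounded (B e)) -> totally_bounded approximable.
Proof.
move=> tbB e e0; have e4 : 0 < e / 4 by lra.
have [s Bs] := tbB _ e4 _ e4; exists s => z Wz.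
have [p /Bs[c sc cp] zp] := Wz _ _ e4 e4.
exists c => //; move: cp; rewrite -!ball_normE /= => cp.
have := ler_normD (c - p) (p - z); rewrite addrA subrK distrC in zp *; lra.
Qed.

End Approximable.

Lemma compact_clconv {R : realType} {X : completeNormedModType R} (A : set X) :
  compact (closure A) -> compact (clconv A).
Proof.
move=> cA; have /choice[net netP] : forall e : R, exists s : seq X,
    0 < e -> A `<=` \bigcup_(c in [set` s]) ball c e.
  move=> e; have [e0|e0] := ltP 0 e; last by exists [::].
  by have [s As] := precompact_totally_bounded _ cA _ e0; exists s.
pose W := approximable (zonotope \o net).
have AW : A `<=` W.
  move=> z Az e d e0 d0; have [c sc cz] := netP e e0 z Az.
  exists c; first exact: mem_zonotope.
  by move: cz; rewrite -ball_normE /= distrC; lra.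
have cW : closed W := closed_approximable _.
have vW : convex_subset W.
  by apply: convex_approximable => e _; exact: convex_zonotope.
apply: subclosed_compact (closed_clconv A) _ (clconv_sub cW vW AW).
apply: totally_bounded_compact cW _.
by apply: totally_bounded_approximable => e _; exact: totally_bounded_zonotope.
Qed.

Lemma nested_compact_sub_open {R : realDomainType} {T : topologicalType}
    (C : R -> set T) (V : set T) :
  (forall d e, 0 < d -> d <= e -> C d `<=` C e) ->
  (forall e, 0 < e -> closed (C e)) -> compact (C 1) -> open V ->
  \bigcap_(e in [set e | 0 < e]) C e `<=` V -> exists2 e, 0 < e & C e `<=` V.
Proof.
move=> Cmono Ccl C1 oV CV; apply: contrapT => noCV.
pose B e := C e `&` ~` V.
have Bclosed e : 0 < e -> closed (B e).
  by move=> e0; exact: closedI (Ccl e e0) (open_closedC oV).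
have PF : ProperFilter (filter_from [set e | 0 < e] B).
  apply: filter_from_proper => [|e e0]; last first.
    apply: contrapT => noB; apply: noCV; exists e => // z Cz.
    by apply: contrapT => Vz; apply: noB; exists z.
  apply: filter_from_filter; first by exists 1; rewrite /= ltr01.
  move=> d e d0 e0; exists (Order.min d e); first by rewrite /= lt_min d0 e0.
  move=> z [Cz Vz]; split; split => //; apply: Cmono Cz;
    by rewrite ?lt_min ?d0 ?e0 ?ge_min ?lexx ?orbT.
have [|p [_ clp]] := C1 _ PF; first by exists 1 => //= z [].
have Bp e : 0 < e -> B e p.
  move=> e0; apply: Bclosed => //; move: clp; rewrite clusterE.
  by apply; exists e.
by have [_] := Bp 1 ltr01; apply; apply: CV => e /Bp[].
Qed.

Section Envelope.
Context {R : realType} {X : completeNormedModType R}.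
Variables (U : set X) (T : X -> X).

Definition local_hull (x : X) (e : R) : set X :=
  clconv (T @` (cball x e `&` closure U)).

Lemma envelopeE x :
  envelope U T x = \bigcap_(e in [set e | 0 < e]) local_hull x e.
Proof. by []. Qed.

Lemma local_hullS x y d e :
  `|y - x| + d <= e -> local_hull y d `<=` local_hull x e.
Proof.
move=> yde; apply: clconvS => _ [w [yw Uw] <-]; exists w => //; split => //.
rewrite /cball /= in yw *.
by have := ler_normD (w - y) (y - x); rewrite addrA subrK; lra.
Qed.

Lemma envelope_sub_local_hull x e :
  0 < e -> envelope U T x `<=` local_hull x e.
Proof. by move=> e0 z /(_ e e0). Qed.

Lemma closed_envelope x : closed (envelope U T x).
Proof.
by rewrite envelopeE; apply: closed_bigI => e _; exact: closed_clconv.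
Qed.

Lemma precompact_bigcup_envelope : rel_compact (T @` closure U) ->
  rel_compact (\bigcup_(x in closure U) envelope U T x).
Proof.
move=> /compact_clconv cTU.
apply: (subclosed_compact (@closed_closure _ _) cTU).
move=> z zE; apply: closed_clconv; apply: (closureS _ zE) => y [x _].
move=> /(envelope_sub_local_hull x 1 ltr01); apply: clconvS => _ [w [_ Uw] <-].
by exists w.
Qed.

Hypothesis Tcompact : forall B : set X,
  B `<=` closure U -> bounded_subset B -> rel_compact (T @` B).

Lemma compact_local_hull x e : compact (local_hull x e).
Proof.
apply: compact_clconv; apply: Tcompact => [z []//|].
exists (`|x| + e) => z [xz _]; rewrite /cball /= in xz.
by have := ler_normD (z - x) x; rewrite subrK; lra.
Qed.

Lemma compact_envelope x : compact (envelope U T x).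
Proof.
apply: subclosed_compact (closed_envelope x) (compact_local_hull x 1) _.
exact: envelope_sub_local_hull.
Qed.

Lemma usc_envelope : usc_on (closure U) (envelope U T).
Proof.
move=> x _ V oV xV.
have [|||e e0 xeV] :=
  nested_compact_sub_open (local_hull x) V _ _ (compact_local_hull x 1) oV.
- by move=> d e d0 de; apply: local_hullS; rewrite subrr normr0 add0r.
- by move=> e _; exact: closed_clconv.
- by rewrite -envelopeE.
exists (e / 2) => [|y _ xy z yz]; first lra.
apply: xeV; apply: (local_hullS x y (e / 2) e); first lra.
by apply: (envelope_sub_local_hull _ _ _ _ yz); lra.
Qed.

End Envelope.

Theorem proposition1 (R : realType) (X : completeNormedModType R)
  (K U : set X) (T : X -> X) :
  is_cone K -> rel_open_in K U ->
  (forall x, closure U x -> K (T x)) ->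
  ((forall B : set X, B `<=` closure U -> bounded_subset B ->
       rel_compact (T @` B)) ->
     (forall x, closure U x -> compact (envelope U T x)) /\
     usc_on (closure U) (envelope U T)) /\
  (rel_compact (T @` closure U) ->
     rel_compact (\bigcup_(x in closure U) envelope U T x)).
Proof.
move=> _ _ _; split; last exact: precompact_bigcup_envelope.
move=> Tcompact; split => [x _|]; first exact: compact_envelope.
exact: usc_envelope.
Qed.
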